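(* Let $d,N,m$ be positive integers with $m\ge d$. Let $X\in\mathbb{R}^{d\times m}$ satisfy $XX^T=I_d$. Consider the two-layer linear network $f(x)=W_2W_1x$ with $W_1\in\mathbb{R}^{N\times d}$, $W_2\in\mathbb{R}^{1\times N}$, and targets $Y=\beta^TX$ for some $\beta\in\mathbb{R}^d\setminus\{0\}$, $\hat\beta=\beta/\|\beta\|$. Let $0<\sigma\ll1$, let $\|W_2^{(0)}\|_F=\sigma$, and take the rank-one initialization $W_1^{(0)}\in\mathbb{R}^{N\times d}$ whose first row is $\sigma\hat\beta^T$ and whose other rows are zero. With initial NTK $K^{(0)}=X^T\big(W_1^{(0)T}W_1^{(0)}+\|W_2^{(0)}\|^2I_d\big)X$ and final NTK $K^{(f)}=\|\beta\|\,X^T(\hat\beta\hat\beta^T+I_d)X+O(\sigma^2)$, one has $\mathrm{KA}(K^{(f)},K^{(0)})=1+O(\sigma^2)$.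
   Context: $\mathrm{KA}(K^{(f)},K^{(0)})=\dfrac{\operatorname{Tr}(K^{(f)}K^{(0)})}{\|K^{(f)}\|_F\,\|K^{(0)}\|_F}$. The expression for $K^{(f)}$ is the asymptotic neural tangent kernel after training this network by gradient flow on the mean squared error from small initialization, taken as given. *)

From mathcomp Require Import all_boot all_order all_algebra.
Set Implicit Arguments. Unset Strict Implicit. Unset Printing Implicit Defensive.
Import Order.TTheory GRing.Theory Num.Theory.
Local Open Scope ring_scope.

Definition frob (R : rcfType) (p q : nat) (A : 'M[R]_(p, q)) : R :=
  Num.sqrt (\sum_(i < p) \sum_(j < q) A i j ^+ 2).

Definition vnorm (R : rcfType) (d : nat) (v : 'cV[R]_d) : R := frob v.

Definition KA (R : rcfType) (m : nat) (K K' : 'M[R]_m) : R :=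
  \tr (K *m K') / (frob K * frob K').

Definition W1init (R : rcfType) (N d : nat) (sigma : R) (bhat : 'cV[R]_d)
  : 'M[R]_(N, d) :=
  \matrix_(i < N, j < d) (if val i == 0%N then sigma * bhat j 0 else 0).

Definition NTK0 (R : rcfType) (d m N : nat) (X : 'M[R]_(d, m))
  (W1 : 'M[R]_(N, d)) (W2 : 'rV[R]_N) : 'M[R]_m :=
  X^T *m (W1^T *m W1 + (frob W2 ^+ 2)%:M) *m X.

From mathcomp Require Import all_boot all_order all_algebra ring lra.
Import Order.TTheory GRing.Theory Num.Theory.
Set Implicit Arguments. Unset Strict Implicit. Unset Printing Implicit Defensive.
Local Open Scope ring_scope.

(* Both kernels are multiples of one symmetric matrix M = X^T (bhat bhat^T + I) X:
   the rank-one W1 has Gram matrix sigma^2 bhat bhat^T, so K^(0) = sigma^2 M exactly,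
   while K^(f) = |beta| M + E with |E|_F = O(sigma^2).  Kernel alignment is the
   cosine of the Frobenius angle, hence invariant under positive scaling, and by
   Cauchy-Schwarz and the triangle inequality the cosine between |beta| M + E and M
   is within 4 |E|_F / (|beta| |M|_F) of 1.  Finally M <> 0 because X X^T = I makes
   tr M = |bhat|^2 + d. *)

Lemma perturbed_ratio_le (R : realFieldType) (n s r k b : R) :
    0 < n -> 0 < s -> r <= n * s / 2 -> `|k - n * s| <= r -> `|b| <= r * s ->
  `|(n * s ^+ 2 + b) / (k * s) - 1| <= 4 * r / (n * s).
Proof.
move=> n_gt0 s_gt0 r_small /ler_normlP[k_lo k_hi] /ler_normlP[b_lo b_hi].
have ns_gt0 : 0 < n * s by rewrite mulr_gt0.
have k_gt0 : 0 < k by nra.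
have ks_gt0 : 0 < k * s by rewrite mulr_gt0.
have -> : (n * s ^+ 2 + b) / (k * s) - 1 = ((n * s - k) * s + b) / (k * s).
  by field; rewrite ?gt_eqF.
rewrite normrM normfV (gtr0_norm ks_gt0) ler_pdivrMr // ler_norml.
have -> : 4 * r / (n * s) * (k * s) = 2 * r * s * (2 * k / (n * s)).
  by field; rewrite ?gt_eqF.
have k_ratio : 1 <= 2 * k / (n * s) by rewrite ler_pdivlMr //; lra.
apply/andP; split; nra.
Qed.

Section MatrixDot.
Variables (R : comRingType) (p q : nat).
Implicit Types (A B : 'M[R]_(p, q)) (c : R).

Definition mxdot A B : R := \tr (A *m B^T).

Lemma mxdotC A B : mxdot A B = mxdot B A.
Proof. by rewrite /mxdot -mxtrace_tr trmx_mul trmxK. Qed.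

Lemma mxdotDl A B C : mxdot (A + B) C = mxdot A C + mxdot B C.
Proof. by rewrite /mxdot mulmxDl mxtraceD. Qed.

Lemma mxdotZl c A B : mxdot (c *: A) B = c * mxdot A B.
Proof. by rewrite /mxdot -scalemxAl mxtraceZ. Qed.

Lemma mxdotDr A B C : mxdot A (B + C) = mxdot A B + mxdot A C.
Proof. by rewrite mxdotC mxdotDl !(mxdotC A). Qed.

Lemma mxdotZr c A B : mxdot A (c *: B) = c * mxdot A B.
Proof. by rewrite mxdotC mxdotZl mxdotC. Qed.

Lemma mxdotl0 B : mxdot 0 B = 0.
Proof. by rewrite /mxdot mul0mx mxtrace0. Qed.

Lemma mxdot_sumsq A : mxdot A A = \sum_i \sum_j A i j ^+ 2.
Proof.
rewrite /mxdot /mxtrace; apply: eq_bigr => i _; rewrite mxE.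
by apply: eq_bigr => j _; rewrite mxE expr2.
Qed.

End MatrixDot.

Section MatrixDotReal.
Variables (R : realFieldType) (p q : nat).
Implicit Types (A B : 'M[R]_(p, q)).

Lemma mxdot_ge0 A : 0 <= mxdot A A.
Proof.
by rewrite mxdot_sumsq sumr_ge0 // => i _; rewrite sumr_ge0 // => j _; rewrite sqr_ge0.
Qed.

Lemma mxdot_eq0 A : (mxdot A A == 0) = (A == 0).
Proof.
apply/idP/idP => [|/eqP->]; last by rewrite mxdotl0.
have sq_ge0 (x : R) : 0 <= x ^+ 2 by rewrite sqr_ge0.
rewrite mxdot_sumsq => /eqP /psumr_eq0P rows0; apply/eqP/matrixP => i j.
have /psumr_eq0P row0 := rows0 (fun i _ => sumr_ge0 _ (fun j _ => sq_ge0 _)) i isT.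
by apply/eqP; rewrite mxE -sqrf_eq0 row0.
Qed.

Lemma mxdot_CauchySchwarz A B : mxdot A B ^+ 2 <= mxdot A A * mxdot B B.
Proof.
have [->|A0] := eqVneq A 0; first by rewrite !mxdotl0 expr0n mul0r.
have a_gt0 : 0 < mxdot A A by rewrite lt_def mxdot_eq0 A0 mxdot_ge0.
have := mxdot_ge0 (mxdot A A *: B - mxdot A B *: A).
rewrite mxdotDl !mxdotDr -!scaleNr !mxdotZl !mxdotZr (mxdotC B A).
set a := mxdot A A; set b := mxdot A B; set c := mxdot B B => h.
have : 0 <= a * (a * c - b ^+ 2) by move: h; congr (_ <= _); ring.
by rewrite pmulr_rge0 // subr_ge0.
Qed.

End MatrixDotReal.

Section Frobenius.
Variables (R : rcfType) (p q : nat).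
Implicit Types (A B : 'M[R]_(p, q)) (c : R).

Lemma frobE A : frob A = Num.sqrt (mxdot A A).
Proof. by rewrite mxdot_sumsq. Qed.

Lemma frob_ge0 A : 0 <= frob A.
Proof. by rewrite frobE sqrtr_ge0. Qed.

Lemma frob_sqr A : frob A ^+ 2 = mxdot A A.
Proof. by rewrite frobE sqr_sqrtr ?mxdot_ge0. Qed.

Lemma frob_gt0 A : A != 0 -> 0 < frob A.
Proof. by move=> A0; rewrite frobE sqrtr_gt0 lt_def mxdot_eq0 A0 mxdot_ge0. Qed.

Lemma frobZ c A : frob (c *: A) = `|c| * frob A.
Proof. by rewrite !frobE mxdotZl mxdotZr mulrA -expr2 sqrtrM ?sqr_ge0 // sqrtr_sqr. Qed.

Lemma frobN A : frob (- A) = frob A.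
Proof. by rewrite -scaleN1r frobZ normrN normr1 mul1r. Qed.

Lemma normr_mxdot_le A B : `|mxdot A B| <= frob A * frob B.
Proof.
rewrite -ler_sqr ?nnegrE ?mulr_ge0 ?frob_ge0 //.
by rewrite real_normK ?num_real // exprMn !frob_sqr mxdot_CauchySchwarz.
Qed.

Lemma frobD_le A B : frob (A + B) <= frob A + frob B.
Proof.
rewrite -ler_sqr ?nnegrE ?addr_ge0 ?frob_ge0 //.
rewrite frob_sqr mxdotDl !mxdotDr (mxdotC B A) sqrrD !frob_sqr.
have := ler_norm (mxdot A B); have := normr_mxdot_le A B; lra.
Qed.

Lemma frob_dist_le A B : `|frob (A + B) - frob A| <= frob B.
Proof.
rewrite ler_norml; have := frobD_le A B; have := frobD_le (A + B) (- B).
by rewrite addrK frobN; lra.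
Qed.

Lemma cos_scale_add_le (n : R) (M E : 'M[R]_(p, q)) :
    0 < n -> M != 0 -> frob E <= n * frob M / 2 ->
  `|mxdot (n *: M + E) M / (frob (n *: M + E) * frob M) - 1|
    <= 4 * frob E / (n * frob M).
Proof.
move=> n_gt0 M0 E_small; rewrite mxdotDl mxdotZl -frob_sqr.
apply: perturbed_ratio_le => //; first exact: frob_gt0.
  by rewrite -[n in n * _]gtr0_norm // -frobZ frob_dist_le.
exact: normr_mxdot_le.
Qed.
End Frobenius.

Lemma KA_symE (R : rcfType) m (K M : 'M[R]_m) :
  M^T = M -> KA K M = mxdot K M / (frob K * frob M).
Proof. by move=> MT; rewrite /KA /mxdot MT. Qed.

Lemma KAZr (R : rcfType) m c (K M : 'M[R]_m) : 0 < c -> KA K (c *: M) = KA K M.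
Proof.
move=> c_gt0; rewrite /KA -scalemxAr mxtraceZ frobZ gtr0_norm //.
by rewrite [frob K * _]mulrCA invfM mulrACA mulfV ?gt_eqF // mul1r.
Qed.

Section RankOneKernel.
Variables (R : realFieldType) (d m : nat) (X : 'M[R]_(d, m)) (b : 'cV[R]_d).

Definition rank1_kernel : 'M[R]_m := X^T *m (b *m b^T + 1%:M) *m X.

Lemma trmx_rank1_kernel : rank1_kernel^T = rank1_kernel.
Proof. by rewrite /rank1_kernel !trmx_mul trmxK mulmxA linearD /= trmx_mul trmxK trmx1. Qed.

Lemma rank1_kernel_neq0 : (0 < d)%N -> X *m X^T = 1%:M -> rank1_kernel != 0.
Proof.
move=> d_gt0 XXT; apply: contraTneq isT => K0.
have : \tr rank1_kernel = mxdot b b + d%:R.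
  by rewrite /rank1_kernel mxtrace_mulC mulmxA XXT mul1mx mxtraceD mxtrace1.
by rewrite K0 mxtrace0 => /eqP; rewrite eq_sym gt_eqF // ltr_wpDl ?mxdot_ge0 ?ltr0n.
Qed.

End RankOneKernel.

Lemma W1init_gram (R : rcfType) N d sigma (b : 'cV[R]_d) : (0 < N)%N ->
  (W1init N sigma b)^T *m W1init N sigma b = sigma ^+ 2 *: (b *m b^T).
Proof.
case: N => // N _; apply/matrixP => i j; rewrite !mxE big_ord_recl big1 => [|k _].
  by rewrite !mxE /= big_ord1 !mxE addr0; ring.
by rewrite !mxE /= mul0r.
Qed.

Lemma NTK0_W1init (R : rcfType) d m N sigma (X : 'M[R]_(d, m)) (b : 'cV[R]_d)
    (W2 : 'rV[R]_N) : (0 < N)%N -> frob W2 = sigma ->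
  NTK0 X (W1init N sigma b) W2 = sigma ^+ 2 *: rank1_kernel X b.
Proof.
move=> N_gt0 W2_norm; rewrite /NTK0 W1init_gram // W2_norm -scalemx1 -scalerDr.
by rewrite -scalemxAr -scalemxAl.
Qed.

Lemma small_sqr_le (R : realFieldType) (C T s : R) :
  0 < T -> 0 < s -> s <= 1 -> s <= T / (`|C| + 1) -> C * s ^+ 2 <= T.
Proof.
move=> T_gt0 s_gt0 s_le1; rewrite ler_pdivlMr ?ltr_wpDl // => sC_le.
have := ler_norm C; have := normr_ge0 C; nra.
Qed.

Unset Implicit Arguments.

Theorem proposition1 (R : rcfType) (d N m : nat)
  (hd : (0 < d)%N) (hN : (0 < N)%N) (hm : (0 < m)%N) (hmd : (d <= m)%N)
  (X : 'M[R]_(d, m)) (hX : X *m X^T = 1%:M)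
  (beta : 'cV[R]_d) (hbeta : beta != 0)
  (W2 : R -> 'rV[R]_N) (hW2 : forall sigma, 0 < sigma -> frob (W2 sigma) = sigma)
  (Kf : R -> 'M[R]_m)
  (hKf : exists C : R, exists delta : R, 0 < delta /\
     forall sigma, 0 < sigma -> sigma < delta ->
       frob (Kf sigma - vnorm beta *:
               (X^T *m ((vnorm beta)^-1 *: beta *m ((vnorm beta)^-1 *: beta)^T
                        + 1%:M) *m X))
       <= C * sigma ^+ 2) :
  exists C : R, exists delta : R, 0 < delta /\
    forall sigma, 0 < sigma -> sigma < delta ->
      `| KA (Kf sigma)
            (NTK0 X (W1init N sigma ((vnorm beta)^-1 *: beta)) (W2 sigma)) - 1|
      <= C * sigma ^+ 2.
Proof.
case: hKf => C [delta [delta_gt0 Kf_close]].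
set n := vnorm beta in Kf_close *; set bhat := n^-1 *: beta in Kf_close *.
set M := rank1_kernel X bhat.
have {}Kf_close : forall sigma, 0 < sigma -> sigma < delta ->
    frob (Kf sigma - n *: M) <= C * sigma ^+ 2 := Kf_close.
have n_gt0 : 0 < n by rewrite frob_gt0.
have s_gt0 : 0 < frob M by rewrite frob_gt0 ?rank1_kernel_neq0.
set T := n * frob M / 2; have T_gt0 : 0 < T by rewrite divr_gt0 ?mulr_gt0.
exists (4 * C / (n * frob M)), (Num.min delta (Num.min 1 (T / (`|C| + 1)))).
split; first by rewrite !lt_min delta_gt0 ltr01 divr_gt0 ?ltr_wpDl.
move=> sigma sigma_gt0; rewrite !lt_min => /and3P[sigma_delta sigma_le1 sigma_T].
have E_small := Kf_close sigma sigma_gt0 sigma_delta.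
have -> : Kf sigma = n *: M + (Kf sigma - n *: M) by rewrite addrC subrK.
rewrite NTK0_W1init ?hW2 // KAZr ?exprn_gt0 // KA_symE ?trmx_rank1_kernel // -/M.
apply: le_trans (cos_scale_add_le n_gt0 _ _) _.
- by rewrite rank1_kernel_neq0.
- by apply: le_trans E_small (small_sqr_le _ _ _ _); rewrite ?ltW.
rewrite [leRHS]mulrAC -[4 * C * _]mulrA.
apply: ler_wpM2r; first by rewrite invr_ge0 mulr_ge0 ?frob_ge0 ?ltW.
by apply: ler_wpM2l.
Qed.
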